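(* If $(A_n)_{n=0}^\infty$ is an Appell sequence, then the Wronskian Appell polynomials $(A_\lambda)_{\lambda}$ (indexed by all integer partitions $\lambda$) satisfy \[ F_\lambda^{\vphantom'}A_\lambda' = \lvert \lambda \rvert \sum_{\mu \lessdot \lambda} F_\mu A_\mu, \] where the sum is over all partitions $\mu$ covered by $\lambda$ in Young's lattice, i.e. obtained from $\lambda$ by removing one cell of its diagram.
   Context: An Appell sequence is a sequence of polynomials $(A_n)_{n\ge0}$ with $A_0=1$ and $A_n'=nA_{n-1}$ for $n\ge1$. For a partition $\lambda$ of length $r$, let $(n_1,\dots,n_r)=(\lambda_r,\lambda_{r-1}+1,\dots,\lambda_1+r-1)$ and $A_\lambda=\operatorname{Wr}[A_{n_1},\dots,A_{n_r}]/\Delta(n_1,\dots,n_r)$, where $\operatorname{Wr}$ is the Wronskian and $\Delta(x_1,\dots,x_r)=\prod_{i<j}(x_j-x_i)$; $A_\emptyset=1$. $F_\lambda$ is the number of standard Young tableaux of shape $\lambda$ and $|\lambda|$ its size. *)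

From HB Require Import structures.
From mathcomp Require Import all_boot all_order all_algebra.
Set Implicit Arguments. Unset Strict Implicit. Unset Printing Implicit Defensive.
Import Order.TTheory GRing.Theory Num.Theory.
Local Open Scope ring_scope.

Definition is_partition (la : seq nat) : bool :=
  sorted geq la && all (fun x => 0 < x)%N la.

Definition psize (la : seq nat) : nat := sumn la.

Definition is_Appell (R : fieldType) (A : nat -> {poly R}) : Prop :=
  A 0%N = 1 /\ forall n : nat, (A n.+1)^`() = n.+1%:R *: A n.

(* (n_1,...,n_r) = (lambda_r, lambda_{r-1}+1, ..., lambda_1 + r - 1),
   0-indexed: n_j = lambda_{r-j} + j  (j = 0..r-1, lambda 0-indexed). *)
Definition nseq_of (la : seq nat) (j : nat) : nat :=
  (nth 0 la (size la - 1 - j) + j)%N.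

Definition wr_mx (R : fieldType) (A : nat -> {poly R}) (la : seq nat)
  : 'M[{poly R}]_(size la) :=
  \matrix_(i < size la, j < size la) (A (nseq_of la j))^`(i).

Definition Delta_n (R : fieldType) (la : seq nat) : R :=
  \prod_(i < size la) \prod_(j < size la | (i < j)%N)
     ((nseq_of la j)%:R - (nseq_of la i)%:R).

(* Wronskian Appell polynomial A_lambda = Wr[A_{n_1},...,A_{n_r}] / Delta.
   For lambda = [::], r = 0, the 0x0 determinant is 1 and Delta = 1. *)
Definition wr_appell (R : fieldType) (A : nat -> {poly R}) (la : seq nat)
  : {poly R} :=
  (Delta_n R la)^-1 *: \det (wr_mx A la).

Definition in_diagram (la : seq nat)
  (c : 'I_(size la) * 'I_(head 0%N la)) : bool :=
  (c.2 < nth 0 la c.1)%N.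

(* A standard Young tableau of shape lambda, viewed as the map
   k |-> cell containing the entry k+1 (k < |lambda|): it is injective,
   lands in the diagram (hence is a bijection onto the diagram), and entries
   increase along rows and down columns, i.e. whenever cell(k) <= cell(l)
   componentwise, k <= l. *)
Definition is_SYT (la : seq nat)
  (T : {ffun 'I_(psize la) -> 'I_(size la) * 'I_(head 0%N la)}) : bool :=
  [&& injectiveb T,
      [forall k, in_diagram (T k)] &
      [forall k, forall l,
         ((T k).1 <= (T l).1)%N && ((T k).2 <= (T l).2)%N ==> (k <= l)%N]].

Definition num_SYT (la : seq nat) : nat := #|[pred T | is_SYT (la := la) T]|.

(* Removing one cell at the end of row i of lambda (before deleting a possible
   resulting zero part). *)
Definition dec_row (la : seq nat) (i : nat) : seq nat :=
  set_nth 0%N la i (nth 0%N la i).-1.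

(* Row i ends in a removable corner iff decrementing it keeps the sequence
   weakly decreasing. *)
Definition removable (la : seq nat) (i : nat) : bool := sorted geq (dec_row la i).

Definition remove_cell (la : seq nat) (i : nat) : seq nat :=
  [seq x <- dec_row la i | (0 < x)%N].

(* Write n = (n_1 < ... < n_r) for the shifted parts of la and normalise the Wronskian
   and the Vandermonde product by prod_k n_k!:
     W(n) = Wr[A_{n_1}, ..., A_{n_r}] / prod_k n_k!,    D(n) = Delta(n) / prod_k n_k!,
   so that A_la = W(n) / D(n).  By the Appell property, W(n)' = sum_j W(n - e_j).
   Lowering the entry of n belonging to row i of la either gives the shifted parts of the
   partition mu obtained by removing the last cell of row i (up to a leading entry 0 when a
   row of length one disappears, which W and D ignore), or, when that cell is not removable,
   a sequence with two equal entries, on which W and D vanish.  Hence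
   W(n)' = sum_mu W(n(mu)), and likewise sum_j D(n - e_j) = sum_mu D(n(mu)).
   Differentiating the Wronskian of the monomials gives sum_j D(n - e_j) = |la| D(n), so the
   branching rule F_la = sum_mu F_mu yields Frobenius' formula F_la = |la|! D(n) by induction
   on |la|.  Therefore F_la A_la = |la|! W(n), and differentiating once more gives
   F_la A_la' = |la|! sum_mu W(n(mu)) = |la| sum_mu F_mu A_mu. *)

From HB Require Import structures.
From mathcomp Require Import all_boot all_order all_algebra.
From mathcomp Require Import perm zify ring.
Set Implicit Arguments. Unset Strict Implicit. Unset Printing Implicit Defensive.
Import Order.TTheory GRing.Theory Num.Theory.

(** * Partitions *)

Lemma geq_transitive : transitive geq.
Proof. exact: rev_trans leq_trans. Qed.

Lemma nth_filter_gt0 (s : seq nat) k :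
  sorted geq s -> nth 0 [seq y <- s | 0 < y] k = nth 0 s k.
Proof.
elim: s k => [|a s IH] k //= s_sorted.
have [a0|a_gt0] := posnP a; last by case: k => //= k; exact/IH/(path_sorted s_sorted).
have s0 : all (pred1 0) s.
  apply: sub_all (order_path_min geq_transitive s_sorted) => y.
  by rewrite /= a0 leqn0.
rewrite a0 (eq_in_filter (a2 := pred0)) ?filter_pred0; last first.
  by move=> y /(allP s0) /eqP ->.
case: k => //= k; rewrite ?nth_nil.
by have [/(mem_nth 0) /(allP s0) /eqP|/(nth_default 0)] := ltnP k (size s).
Qed.

Lemma sumn_filter_gt0 (s : seq nat) : sumn [seq y <- s | 0 < y] = sumn s.
Proof. by elim: s => //= a s IH; case: posnP => [->|_] /=; rewrite IH. Qed.

Lemma nth_le_sumn (s : seq nat) i : nth 0 s i <= sumn s.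
Proof. by elim: s i => [|a s IH] [|i] //=; rewrite ?leq_addr ?(leq_trans (IH i)) ?leq_addl. Qed.

Section Partition.
Variable la : seq nat.
Hypothesis la_part : is_partition la.

Lemma part_nth_gt0E i : (0 < nth 0 la i) = (i < size la).
Proof.
case/andP: la_part => _ /allP la_pos.
by have [/(mem_nth 0) /la_pos|/(nth_default 0) ->] := ltnP i (size la).
Qed.

Lemma part_nth_gt0 i : i < size la -> 0 < nth 0 la i.
Proof. by rewrite part_nth_gt0E. Qed.

Lemma part_nth_geq i j : i <= j -> nth 0 la j <= nth 0 la i.
Proof.
case/andP: la_part => la_sorted _ le_ij.
have [j_lt|/(nth_default 0) -> //] := ltnP j (size la).
by apply: (sorted_leq_nth geq_transitive leqnn 0 la_sorted); rewrite ?inE ?(leq_ltn_trans le_ij).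
Qed.

Lemma part_nth_le_head i : nth 0 la i <= head 0 la.
Proof. by rewrite -nth0 part_nth_geq. Qed.

Lemma nth_dec_row i k :
  nth 0 (dec_row la i) k = if k == i then (nth 0 la i).-1 else nth 0 la k.
Proof. exact: nth_set_nth. Qed.

Lemma size_dec_row i : i < size la -> size (dec_row la i) = size la.
Proof. by move=> i_lt; rewrite size_set_nth; apply/maxn_idPr. Qed.

Lemma removableE i : i < size la -> removable la i = (nth 0 la i.+1 < nth 0 la i).
Proof.
move=> i_lt; have la_i_gt0 := part_nth_gt0 i_lt.
have la_sorted : sorted geq la by case/andP: la_part.
apply/(sortedP 0)/idP => [dec_sorted|lt_next k].
  have [i1_lt|/(nth_default 0) -> //] := ltnP i.+1 (size la).
  have := dec_sorted i; rewrite size_dec_row // !nth_dec_row eqxx gtn_eqF //.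
  by move=> /(_ i1_lt) le_next; rewrite (leq_ltn_trans le_next) // prednK.
rewrite size_dec_row // !nth_dec_row => k1_lt.
have := elimT (sortedP 0) la_sorted k k1_lt; rewrite /=.
have [-> _|_] := eqVneq k i; first by rewrite gtn_eqF // -ltnS prednK.
case: (eqVneq k.+1 i) => [k1i|_] //=.
by rewrite -k1i => le_k; rewrite (leq_trans (leq_pred _)).
Qed.

Lemma nth_remove_cell i k : removable la i ->
  nth 0 (remove_cell la i) k = if k == i then (nth 0 la i).-1 else nth 0 la k.
Proof. by move=> i_rem; rewrite nth_filter_gt0 // nth_dec_row. Qed.

Lemma nth_remove_cell_le i k : removable la i -> nth 0 (remove_cell la i) k <= nth 0 la k.
Proof. by move=> i_rem; rewrite nth_remove_cell //; case: eqP => [->|]; rewrite ?leq_pred. Qed.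

Lemma remove_cell_partition i : removable la i -> is_partition (remove_cell la i).
Proof.
by move=> i_rem; rewrite /is_partition filter_all sorted_filter //; exact: geq_transitive.
Qed.

Lemma psize_remove_cell i : i < size la -> (psize (remove_cell la i)).+1 = psize la.
Proof.
move=> i_lt; have := part_nth_gt0 i_lt.
have := nth_le_sumn la i.
by rewrite /psize sumn_filter_gt0 sumn_set_nth0; lia.
Qed.

Lemma size_remove_cell_le i : i < size la -> size (remove_cell la i) <= size la.
Proof. by move=> i_lt; rewrite size_filter -(size_dec_row i_lt) count_size. Qed.

Lemma head_remove_cell_le i : removable la i -> head 0 (remove_cell la i) <= head 0 la.
Proof. by move=> i_rem; rewrite -!nth0 nth_remove_cell_le. Qed.

End Partition.

Lemma psize_eq0 la : is_partition la -> psize la = 0 -> la = [::].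
Proof.
case: la => // a s la_part; have := part_nth_gt0 la_part (ltn0Sn _).
by rewrite /psize /=; case: a {la_part}.
Qed.

(** * Shifted parts of a partition *)

Definition decr (n : nat -> nat) (j : nat) : nat -> nat :=
  fun k => if k == j then (n k).-1 else n k.

Lemma sum_decr r (n : nat -> nat) (j : 'I_r) : 0 < n j ->
  \sum_(k < r) decr n j k = (\sum_(k < r) n k).-1.
Proof.
move=> nj_gt0; rewrite (bigD1 j) //= [in RHS](bigD1 j) //= /decr eqxx.
rewrite (eq_bigr (fun k : 'I_r => n k)) => [|k /negbTE k_neq]; last by rewrite val_eqE k_neq.
by case: (n j) nj_gt0.
Qed.

Definition prod_fact r (n : nat -> nat) : nat := \prod_(k < r) (n k)`!.

Lemma eq_prod_fact r (m m' : nat -> nat) : {in gtn r, m =1 m'} -> prod_fact r m = prod_fact r m'.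
Proof. by move=> eq_m; apply: eq_bigr => k _; rewrite (eq_m k (ltn_ord k)). Qed.

Lemma prod_fact_decr r (n : nat -> nat) (j : 'I_r) :
  0 < n j -> prod_fact r n = n j * prod_fact r (decr n j).
Proof.
move=> nj_gt0; rewrite /prod_fact (bigD1 j) //= [in RHS](bigD1 j) //= /decr eqxx.
rewrite [in RHS](eq_bigr (fun k : 'I_r => (n k)`!)) => [|k /negbTE k_neq]; last first.
  by rewrite val_eqE k_neq.
by rewrite -(prednK nj_gt0) factS mulnA.
Qed.

Lemma prod_fact_shift r (m : nat -> nat) : m 0 = 0 -> (forall k, k < r -> 0 < m k.+1) ->
  prod_fact r.+1 m = (\prod_(k < r) m k.+1) * prod_fact r (fun k => (m k.+1).-1).
Proof.
move=> m0 m_gt0; rewrite /prod_fact big_ord_recl m0 mul1n -big_split /=.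
apply: eq_bigr => k _; have mk_gt0 := m_gt0 k (ltn_ord k).
by rewrite /bump add1n -{1}(prednK mk_gt0) factS prednK.
Qed.

Section ShapeSequence.
Variable la : seq nat.
Hypothesis la_part : is_partition la.

Lemma nseq_of_gt0 j : j < size la -> 0 < nseq_of la j.
Proof. by move=> j_lt; rewrite /nseq_of addn_gt0 (part_nth_gt0 la_part) //; lia. Qed.

Lemma nseq_of_lt i j : i < j -> j < size la -> nseq_of la i < nseq_of la j.
Proof.
move=> lt_ij j_lt; have := @part_nth_geq la la_part (size la - 1 - j) (size la - 1 - i).
by rewrite /nseq_of; lia.
Qed.

Lemma sum_nseq_of : \sum_(j < size la) nseq_of la j = psize la + \sum_(j < size la) j.
Proof.
rewrite big_split /=; congr (_ + _).
rewrite /psize sumnE (big_nth 0) big_mkord (reindex_inj rev_ord_inj) /=.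
by apply: eq_bigr => j _; congr nth; have := ltn_ord j; lia.
Qed.

Lemma nseq_of_nonremovable i : i < size la -> ~~ removable la i ->
  let j := size la - i.+1 in 0 < j /\ decr (nseq_of la) j j.-1 = decr (nseq_of la) j j.
Proof.
move=> i_lt; rewrite (removableE la_part) // -leqNgt /= => le_next.
have i1_lt : i.+1 < size la.
  by rewrite -(part_nth_gt0E la_part) (leq_trans _ le_next) ?(part_nth_gt0 la_part).
have := part_nth_geq la_part (leqnSn i); rewrite /decr /nseq_of eqxx.
have -> : ((size la - i.+1).-1 == size la - i.+1) = false by apply/negbTE/eqP; lia.
have -> : size la - 1 - (size la - i.+1).-1 = i.+1 by lia.
have -> : size la - 1 - (size la - i.+1) = i by lia.
lia.
Qed.

Lemma nseq_of_remove_cell i : removable la i -> 1 < nth 0 la i ->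
  size (remove_cell la i) = size la /\
  forall k, k < size la -> decr (nseq_of la) (size la - i.+1) k = nseq_of (remove_cell la i) k.
Proof.
move=> i_rem la_i_gt1; have i_lt : i < size la by rewrite -(part_nth_gt0E la_part) ltnW.
have mu_size : size (remove_cell la i) = size la.
  rewrite size_filter -(size_dec_row i_lt); apply/eqP; rewrite -all_count.
  apply/(all_nthP 0) => k; rewrite size_dec_row // nth_dec_row -(part_nth_gt0E la_part).
  by case: eqP => [-> _|//]; lia.
split=> // k k_lt; rewrite /decr /nseq_of mu_size nth_remove_cell //.
have [->|ne_k] := eqVneq k (size la - i.+1).
  have -> : size la - 1 - (size la - i.+1) = i by lia.
  rewrite eqxx; lia.
by rewrite (_ : (size la - 1 - k == i) = false) //; apply/negbTE/eqP; lia.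
Qed.

Lemma nseq_of_remove_last_cell i : removable la i -> nth 0 la i = 1 ->
  [/\ size la = i.+1, size (remove_cell la i) = i, decr (nseq_of la) 0 0 = 0 &
      forall k, k < i -> decr (nseq_of la) 0 k.+1 = (nseq_of (remove_cell la i) k).+1].
Proof.
move=> i_rem la_i1; have i_lt : i < size la by rewrite -(part_nth_gt0E la_part) la_i1.
have la_size : size la = i.+1.
  have : ~~ (0 < nth 0 la i.+1) by rewrite -leqNgt -ltnS -la_i1 -(removableE la_part).
  by rewrite (part_nth_gt0E la_part) -leqNgt => ?; apply/eqP; rewrite eqn_leq i_lt andbT.
have mu_size : size (remove_cell la i) = i.
  have mu_lt k : (k < size (remove_cell la i)) = (k < i).
    rewrite -(part_nth_gt0E (remove_cell_partition i_rem)) nth_remove_cell //.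
    case: eqP => [->|/eqP ne_ki]; rewrite ?la_i1 ?ltnn //.
    by rewrite (part_nth_gt0E la_part) la_size ltnS leq_eqVlt (negbTE ne_ki).
  apply/eqP; rewrite eqn_leq leqNgt mu_lt ltnn /=.
  by case: i {i_rem la_i1 i_lt la_size} mu_lt => // i ->.
split=> //; first by rewrite /decr /nseq_of la_size subn0 subn1 addn0 la_i1.
move=> k k_lt; rewrite /decr /nseq_of la_size mu_size nth_remove_cell //.
rewrite (_ : (i - 1 - k == i) = false) /=; last by apply/negbTE/eqP; lia.
by rewrite addnS; congr (nth _ _ _ + _).+1; lia.
Qed.

End ShapeSequence.

(** * Standard Young tableaux and the branching rule *)

(* is_SYT on plain naturals: entry k.+1 sits in cell g k. *)
Definition standard_filling (la : seq nat) (n : nat) (g : nat -> nat * nat) : bool :=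
  [&& [forall k : 'I_n, (g k).2 < nth 0 la (g k).1],
      [forall k : 'I_n, forall l : 'I_n, (g k == g l) ==> (k == l)] &
      [forall k : 'I_n, forall l : 'I_n,
         ((g k).1 <= (g l).1) && ((g k).2 <= (g l).2) ==> (k <= l)]].

Lemma standard_fillingP la n g : reflect
  [/\ forall k, k < n -> (g k).2 < nth 0 la (g k).1,
      forall k l, k < n -> l < n -> g k = g l -> k = l &
      forall k l, k < n -> l < n -> (g k).1 <= (g l).1 -> (g k).2 <= (g l).2 -> k <= l]
  (standard_filling la n g).
Proof.
apply: (iffP and3P) => [[/forallP g_diag /forallP g_inj /forallP g_mono]|[g_diag g_inj g_mono]].
  split=> [k k_lt|k l k_lt l_lt gkl|k l k_lt l_lt le1 le2]; first exact: (g_diag (Ordinal k_lt)).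
    have := forallP (g_inj (Ordinal k_lt)) (Ordinal l_lt).
    by rewrite /= gkl eqxx => /eqP /(congr1 val).
  by have := forallP (g_mono (Ordinal k_lt)) (Ordinal l_lt); rewrite /= le1 le2.
split; apply/forallP => k; first exact: g_diag.
  by apply/forallP => l; apply/implyP => /eqP gkl; apply/eqP/val_inj/g_inj; rewrite ?ltn_ord.
by apply/forallP => l; apply/implyP => /andP[le1 le2]; apply: g_mono.
Qed.

Lemma eq_standard_filling la n g g' : {in gtn n, g =1 g'} ->
  standard_filling la n g = standard_filling la n g'.
Proof.
move=> eq_g; apply/standard_fillingP/standard_fillingP => -[g_diag g_inj g_mono].
  split=> [k k_lt|k l k_lt l_lt|k l k_lt l_lt]; rewrite -?(eq_g k) -?(eq_g l) //; auto.
split=> [k k_lt|k l k_lt l_lt|k l k_lt l_lt]; rewrite ?(eq_g k) ?(eq_g l) //; auto.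
Qed.

Definition diagram_cells (la : seq nat) : seq (nat * nat) :=
  [seq (i, j) | i <- iota 0 (size la), j <- iota 0 (nth 0 la i)].

Lemma mem_diagram_cells la c : (c \in diagram_cells la) = (c.2 < nth 0 la c.1).
Proof.
apply/allpairsPdep/idP => [[i [j [_ j_lt ->]]]|c_in]; first by rewrite mem_iota in j_lt.
exists c.1, c.2; rewrite !mem_iota /= c_in -surjective_pairing; split=> //.
by rewrite add0n; case: (ltnP c.1 (size la)) c_in => // /(nth_default 0) ->.
Qed.

Lemma size_diagram_cells la : size (diagram_cells la) = psize la.
Proof.
rewrite size_allpairs_dep (eq_map (fun i => size_iota 0 (nth 0 la i))).
by rewrite -/(mkseq _ _) mkseq_nth.
Qed.

Lemma standard_filling_onto la g c : standard_filling la (psize la) g ->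
  c.2 < nth 0 la c.1 -> exists2 k, k < psize la & g k = c.
Proof.
case/standard_fillingP => g_diag g_inj _ c_in.
have g_uniq : uniq (map g (iota 0 (psize la))).
  by rewrite map_inj_in_uniq ?iota_uniq // => k l; rewrite !mem_iota; apply: g_inj.
have g_sub : {subset map g (iota 0 (psize la)) <= diagram_cells la}.
  by move=> d /mapP[k]; rewrite mem_iota => k_lt ->; rewrite mem_diagram_cells g_diag.
have [|_ g_onto] := uniq_min_size g_uniq g_sub.
  by rewrite size_map size_iota size_diagram_cells.
have : c \in map g (iota 0 (psize la)) by rewrite g_onto mem_diagram_cells.
by case/mapP => k; rewrite mem_iota => k_lt ->; exists k.
Qed.

Definition extend (g : nat -> nat * nat) (n : nat) (c : nat * nat) : nat -> nat * nat :=
  fun k => if k == n then c else g k.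

Lemma extend_last g n c : extend g n c n = c.
Proof. by rewrite /extend eqxx. Qed.

Lemma extend_lt g n c k : k < n -> extend g n c k = g k.
Proof. by rewrite /extend => /ltn_eqF ->. Qed.

Definition is_corner (la : seq nat) (c : nat * nat) : bool :=
  [&& c.1 < size la, removable la c.1 & c.2.+1 == nth 0 la c.1].

Lemma corner_of_standard_filling la n g c : is_partition la -> psize la = n.+1 ->
  standard_filling la n.+1 (extend g n c) -> is_corner la c.
Proof.
move=> la_part la_size std; have /standard_fillingP[g_diag _ g_mono] := std.
have c_in : c.2 < nth 0 la c.1 by have := g_diag n (ltnSn n); rewrite extend_last.
have c_max d : d.2 < nth 0 la d.1 -> c.1 <= d.1 -> c.2 <= d.2 -> d = c.
  rewrite -la_size in std; move=> /(standard_filling_onto std)[k k_lt <-].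
  rewrite la_size in k_lt; have := g_mono n k (ltnSn n) k_lt; rewrite extend_last.
  move=> le_nk le1 le2; have -> : k = n by have := le_nk le1 le2; lia.
  exact: extend_last.
have c1_lt : c.1 < size la by rewrite -(part_nth_gt0E la_part) (leq_ltn_trans _ c_in).
apply/and3P; split=> //.
  rewrite (removableE la_part) // ltnNge; apply/negP => le_next.
  have := c_max (c.1.+1, c.2) (leq_trans c_in le_next) (leqnSn _) (leqnn _).
  by move=> /(congr1 fst) /=; lia.
rewrite eqn_leq c_in /= leqNgt; apply/negP => c_in'.
by have := c_max (c.1, c.2.+1) c_in' (leqnn _) (leqnSn _) => /(congr1 snd) /=; lia.
Qed.

Lemma mem_remove_corner la c d : is_corner la c ->
  (d.2 < nth 0 (remove_cell la c.1) d.1) = (d.2 < nth 0 la d.1) && (d != c).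
Proof.
case: c d => [i j] [a b] /and3P[/= _ i_rem /eqP la_i].
rewrite nth_remove_cell // xpair_eqE /=; case: eqP => [->|/eqP ne_ai]; last by rewrite andbT.
by rewrite -la_i /=; lia.
Qed.

Lemma corner_maximal la c d : is_partition la -> is_corner la c ->
  d.2 < nth 0 la d.1 -> c.1 <= d.1 -> c.2 <= d.2 -> d = c.
Proof.
case: c d => [i j] [a b] la_part /and3P[/= i_lt i_rem /eqP la_i] /= d_in le_ia le_jb.
have := part_nth_geq la_part le_ia; rewrite (removableE la_part) // in i_rem.
rewrite leq_eqVlt in le_ia; case/orP: le_ia => [/eqP eq_ia|lt_ia].
  by move: d_in; rewrite -eq_ia -la_i => ? _; congr pair; lia.
by have := part_nth_geq la_part lt_ia; lia.
Qed.

Lemma standard_filling_restrict la n g c : is_corner la c ->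
  standard_filling la n.+1 (extend g n c) -> standard_filling (remove_cell la c.1) n g.
Proof.
move=> c_corner /standard_fillingP[g_diag g_inj g_mono].
apply/standard_fillingP; split=> [k k_lt|k l k_lt l_lt|k l k_lt l_lt].
- rewrite mem_remove_corner //; have := g_diag k (ltnW k_lt); rewrite extend_lt // => -> /=.
  apply/eqP => gkc; have := g_inj k n (ltnW k_lt) (ltnSn n).
  by rewrite extend_lt // extend_last => /(_ gkc); lia.
- by have := g_inj k l (ltnW k_lt) (ltnW l_lt); rewrite !extend_lt.
- by have := g_mono k l (ltnW k_lt) (ltnW l_lt); rewrite !extend_lt.
Qed.

Lemma standard_filling_extend la n g c : is_partition la -> psize la = n.+1 ->
  standard_filling la n.+1 (extend g n c) =
  is_corner la c && standard_filling (remove_cell la c.1) n g.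
Proof.
move=> la_part la_size; apply/idP/andP => [std|[c_corner]].
  have c_corner := corner_of_standard_filling la_part la_size std.
  by split; last exact: standard_filling_restrict std.
case/standard_fillingP => g_diag g_inj g_mono.
have g_in k : k < n -> (g k).2 < nth 0 la (g k).1 /\ g k != c.
  by move=> k_lt; apply/andP; rewrite -mem_remove_corner ?g_diag.
have c_in : c.2 < nth 0 la c.1 by case/and3P: c_corner => _ _ /eqP <-.
have ltnS_split k : k < n.+1 -> k = n \/ k < n by rewrite ltnS leq_eqVlt => /predU1P.
apply/standard_fillingP; split=> [k|k l|k l].
- by case/ltnS_split => [->|k_lt]; rewrite ?extend_last ?extend_lt //; case: (g_in k k_lt).
- case/ltnS_split => [->|k_lt] /ltnS_split[->|l_lt] //; rewrite ?extend_last ?extend_lt //.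
  + by move=> c_gl; have [_] := g_in l l_lt; rewrite c_gl eqxx.
  + by move=> gk_c; have [_] := g_in k k_lt; rewrite gk_c eqxx.
  + exact: g_inj.
- move=> k_le /ltnS_split[->|l_lt]; first by rewrite -ltnS.
  case/ltnS_split: k_le => [->|k_lt]; rewrite ?extend_last !extend_lt //; last exact: g_mono.
  move=> le1 le2; have [g_l_in /eqP] := g_in l l_lt.
  by rewrite (corner_maximal la_part c_corner g_l_in le1 le2).
Qed.

Definition cells n a b (T : {ffun 'I_n -> 'I_a * 'I_b}) (k : nat) : nat * nat :=
  if (insub k : option 'I_n) is Some k' then (val (T k').1, val (T k').2) else (0, 0).

Lemma cellsE n a b (T : {ffun 'I_n -> 'I_a * 'I_b}) (k : 'I_n) :
  cells T k = (val (T k).1, val (T k).2).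
Proof. by rewrite /cells valK. Qed.

Definition card_fillings (P : (nat -> nat * nat) -> bool) n a b : nat :=
  #|[pred T : {ffun 'I_n -> 'I_a * 'I_b} | P (cells T)]|.

Lemma num_SYT_card_fillings la :
  num_SYT la = card_fillings (standard_filling la (psize la)) (psize la) (size la) (head 0 la).
Proof.
apply: eq_card => T; rewrite !inE; apply/and3P/standard_fillingP.
  case=> /injectiveP T_inj /forallP T_diag /forallP T_mono.
  split=> [k k_lt|k l k_lt l_lt|k l k_lt l_lt];
    rewrite (cellsE T (Ordinal k_lt)) ?(cellsE T (Ordinal l_lt)).
  - exact: T_diag.
  - case=> /val_inj eq1 /val_inj eq2.
    by move: (T_inj _ _ (injective_projections _ _ eq1 eq2)) => [].
  - by move=> le1 le2; have := forallP (T_mono (Ordinal k_lt)) (Ordinal l_lt); rewrite /= le1 le2.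
case=> T_diag T_inj T_mono; split.
- apply/injectiveP => k l eq_kl; apply/val_inj/(T_inj _ _ (ltn_ord k) (ltn_ord l)).
  by rewrite !cellsE eq_kl.
- by apply/forallP => k; have := T_diag k (ltn_ord k); rewrite cellsE.
- apply/forallP => k; apply/forallP => l; apply/implyP => /andP[le1 le2].
  by apply: T_mono; rewrite ?cellsE.
Qed.

Lemma card_pred_bij (A B : finType) (f : A -> B) (PA : {pred A}) (PB : {pred B}) :
  injective f -> {in PA, forall x, f x \in PB} ->
  (forall y, y \in PB -> exists2 x, x \in PA & f x = y) -> #|PA| = #|PB|.
Proof.
move=> f_inj f_PA f_onto; rewrite -(card_image f_inj); apply: eq_card => y.
by apply/imageP/idP => [[x x_in ->]|/f_onto[x x_in <-]]; [exact: f_PA | exists x].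
Qed.

Definition ffun_extend n a b (T : {ffun 'I_n -> 'I_a * 'I_b}) (c : 'I_a * 'I_b) :
  {ffun 'I_n.+1 -> 'I_a * 'I_b} := [ffun k => if unlift ord_max k is Some k' then T k' else c].

Lemma cells_ffun_extend n a b (T : {ffun 'I_n -> 'I_a * 'I_b}) c :
  cells (ffun_extend T c) =1 extend (cells T) n (val c.1, val c.2).
Proof.
move=> k; have [k_lt|k_ge] := ltnP k n.+1; last first.
  by rewrite /extend gtn_eqF // /cells !insubF // ltnNge ?k_ge ?(ltnW k_ge).
rewrite (cellsE _ (Ordinal k_lt)) ffunE; case: unliftP => [j|] /(congr1 val) /= k_val.
  by rewrite k_val /bump leqNgt ltn_ord add0n extend_lt ?cellsE.
by rewrite k_val extend_last.
Qed.

Section CardFillings.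
Variables (P : (nat -> nat * nat) -> bool) (n : nat).

(* num_SYT counts inside a box depending on the shape; this moves the count for a smaller
   shape into a larger box. *)
Lemma card_fillings_widen a b a' b' : a <= a' -> b <= b' ->
  (forall g g', {in gtn n, g =1 g'} -> P g = P g') ->
  (forall g, P g -> forall k, k < n -> (g k).1 < a /\ (g k).2 < b) ->
  card_fillings P n a b = card_fillings P n a' b'.
Proof.
move=> le_a le_b P_ext P_bound.
pose widen (T : {ffun 'I_n -> 'I_a * 'I_b}) : {ffun 'I_n -> 'I_a' * 'I_b'} :=
  [ffun k => (widen_ord le_a (T k).1, widen_ord le_b (T k).2)].
have cells_widen T : cells (widen T) =1 cells T.
  by move=> k; rewrite /cells; case: insub => // k'; rewrite ffunE.
apply: (card_pred_bij (f := widen)) => [T1 T2 /ffunP eq_T|T|T'];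
  rewrite ?inE /=; [|move=> T_P|move=> T'_P].
- apply/ffunP => k; have := eq_T k; rewrite !ffunE => -[eq1 eq2].
  by apply: injective_projections; apply: val_inj; [exact: eq1 | exact: eq2].
- by rewrite (P_ext _ (cells T)) // => k _; rewrite cells_widen.
have T'_bound (k : 'I_n) : (T' k).1 < a /\ (T' k).2 < b.
  by have := P_bound _ T'_P k (ltn_ord k); rewrite cellsE.
exists [ffun k => (Ordinal (proj1 (T'_bound k)), Ordinal (proj2 (T'_bound k)))].
  by rewrite inE (P_ext _ (cells T')) // => k k_lt; rewrite !(cellsE _ (Ordinal k_lt)) ffunE.
by apply/ffunP => k; rewrite !ffunE; apply: injective_projections; apply: val_inj.
Qed.

Lemma card_fillings_last a b : (forall g g', {in gtn n.+1, g =1 g'} -> P g = P g') ->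
  card_fillings P n.+1 a b =
  \sum_(c : 'I_a * 'I_b) card_fillings (fun g => P (extend g n (val c.1, val c.2))) n a b.
Proof.
move=> P_ext; rewrite /card_fillings -sum1_card.
rewrite (partition_big (fun T : {ffun 'I_n.+1 -> 'I_a * 'I_b} => T ord_max) predT) //=.
apply: eq_bigr => c _; rewrite sum1_card; symmetry.
apply: (card_pred_bij (f := fun T : {ffun 'I_n -> 'I_a * 'I_b} => ffun_extend T c)).
- move=> T1 T2 eq_T; apply/ffunP => k.
  by have := congr1 (fun T : {ffun 'I_n.+1 -> _} => T (lift ord_max k)) eq_T; rewrite !ffunE liftK.
- move=> T; rewrite inE unfold_in /= inE ffunE unlift_none eqxx andbT => T_P.
  by rewrite (P_ext _ (extend (cells T) n (val c.1, val c.2))) // => k _; rewrite cells_ffun_extend.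
move=> T; rewrite unfold_in /= inE => /andP[T_P /eqP T_last].
set T' := [ffun k => T (lift ord_max k)].
have T_ext : ffun_extend T' c = T.
  by apply/ffunP => k; rewrite !ffunE; case: unliftP => [j ->|->]; rewrite ?ffunE.
exists T' => //; rewrite inE (P_ext _ (cells (ffun_extend T' c))) ?T_ext //.
by move=> k _; rewrite -T_ext cells_ffun_extend.
Qed.

End CardFillings.

Lemma sum_corners la (F : nat -> nat) : is_partition la ->
  \sum_(c : 'I_(size la) * 'I_(head 0 la) | is_corner la (val c.1, val c.2)) F c.1 =
  \sum_(i < size la | removable la i) F i.
Proof.
move=> la_part.
rewrite (eq_bigl (fun c : 'I_(size la) * 'I_(head 0 la) =>
  removable la c.1 && (c.2.+1 == nth 0 la c.1))); last first.
  by case=> i j; rewrite /is_corner /= ltn_ord.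
rewrite -(pair_big_dep (fun i : 'I_(size la) => removable la i)
  (fun i (j : 'I_(head 0 la)) => j.+1 == nth 0 la i) (fun i _ => F i)) /=.
apply: eq_bigr => i _; have la_i_gt0 := part_nth_gt0 la_part (ltn_ord i).
have j_lt : (nth 0 la i).-1 < head 0 la.
  by rewrite (leq_trans _ (part_nth_le_head la_part i)) // prednK.
rewrite (big_pred1 (Ordinal j_lt)) // => j.
by rewrite /= -val_eqE /= -(prednK la_i_gt0) eqSS.
Qed.

Lemma num_SYT_branch la : is_partition la -> 0 < psize la ->
  num_SYT la = \sum_(i < size la | removable la i) num_SYT (remove_cell la i).
Proof.
move=> la_part la_size_gt0.
rewrite -(sum_corners (fun i => num_SYT (remove_cell la i)) la_part) num_SYT_card_fillings.
case E : (psize la) la_size_gt0 => [//|n] _.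
rewrite card_fillings_last; last by move=> g g' /eq_standard_filling.
rewrite [RHS]big_mkcond /=; apply: eq_bigr => c _.
rewrite /card_fillings (eq_card (B := [pred T | is_corner la (val c.1, val c.2) &&
  standard_filling (remove_cell la c.1) n (cells T)])); last first.
  by move=> T; rewrite !inE standard_filling_extend.
case: ifP => [c_corner|_]; last by apply: eq_card0 => T; rewrite !inE.
have /and3P[c1_lt c_rem _] := c_corner.
have mu_part := remove_cell_partition c_rem.
have mu_size : psize (remove_cell la c.1) = n by apply/succn_inj; rewrite psize_remove_cell.
rewrite num_SYT_card_fillings mu_size (card_fillings_widen (a' := size la) (b' := head 0 la)).
- by apply: eq_card => T; rewrite !inE.
- exact: size_remove_cell_le.
- exact: head_remove_cell_le.
- by move=> g g' /eq_standard_filling.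
move=> g /standard_fillingP[g_diag _ _] k /g_diag g_in; split.
  by rewrite -(part_nth_gt0E mu_part) (leq_ltn_trans _ g_in).
exact: leq_trans g_in (part_nth_le_head mu_part _).
Qed.

Lemma num_SYT_nil : num_SYT [::] = 1.
Proof.
rewrite /num_SYT (eq_card (B := predT)) ?card_predT ?card_ffun ?card_ord // => T.
by rewrite !inE; apply/and3P; split; [apply/injectiveP => -[] | apply/forallP => -[]..].
Qed.

(** * Wronskians of Appell sequences *)

Local Open Scope ring_scope.

Lemma deriv_prod (R : nzRingType) n (f : 'I_n -> {poly R}) :
  (\prod_(i < n) f i)^`() =
  \sum_(k < n) \prod_(i < n) (if i == k then (f i)^`() else f i).
Proof.
elim: n f => [|n IH] f; first by rewrite !big_ord0 -polyC1 derivC.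
have widen_neq_max (i : 'I_n) : (widen_ord (leqnSn n) i == ord_max) = false.
  by rewrite -val_eqE /= ltn_eqF.
rewrite big_ord_recr derivM IH big_distrl [RHS]big_ord_recr /=; congr (_ + _).
  apply: eq_bigr => k _; rewrite big_ord_recr /= eq_sym widen_neq_max.
  by congr (_ * _); apply: eq_bigr => i _; rewrite (inj_eq (@widen_ord_inj _ _ _)).
by rewrite big_ord_recr /= eqxx; congr (_ * _); apply: eq_bigr => i _; rewrite widen_neq_max.
Qed.

Lemma deriv_det (R : comNzRingType) n (M : 'M[{poly R}]_n) :
  (\det M)^`() =
  \sum_(j < n) \det (\matrix_(i, k) if k == j then (M i k)^`() else M i k).
Proof.
rewrite /determinant raddf_sum exchange_big /=; apply: eq_bigr => s _.
have sign_const : ((-1) ^+ s : {poly R})^`() = 0.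
  by case: (odd_perm s); rewrite ?expr1 ?expr0 ?derivN -polyC1 derivC ?oppr0.
rewrite derivM sign_const mul0r add0r -mulr_sumr; congr (_ * _).
rewrite deriv_prod [RHS](reindex_inj (@perm_inj _ s)) /=.
apply: eq_bigr => k _; apply: eq_bigr => i _.
by rewrite mxE (inj_eq (@perm_inj _ s)); case: eqP => // ->.
Qed.

Implicit Types (r : nat) (m n : nat -> nat).

Definition wronskian_mx (R : nzRingType) (A : nat -> {poly R}) r (n : nat -> nat) :
  'M[{poly R}]_r := \matrix_(i < r, j < r) (A (n j))^`(i).

Definition wronskian (R : comNzRingType) (A : nat -> {poly R}) r n : {poly R} :=
  \det (wronskian_mx A r n).

Lemma eq_wronskian (R : comNzRingType) (A : nat -> {poly R}) r m m' :
  {in gtn r, m =1 m'} -> wronskian A r m = wronskian A r m'.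
Proof. by move=> eq_m; congr (\det _); apply/matrixP => i j; rewrite !mxE (eq_m j (ltn_ord j)). Qed.

Lemma wronskian_eq0 (R : comNzRingType) (A : nat -> {poly R}) r m j :
  (j.+1 < r)%N -> m j = m j.+1 -> wronskian A r m = 0.
Proof.
move=> j1_lt eq_m; rewrite /wronskian -det_tr.
apply: (determinant_alternate (i1 := Ordinal (ltnW j1_lt)) (i2 := Ordinal j1_lt)).
  by rewrite -val_eqE /= neq_ltn ltnSn.
by move=> k; rewrite !mxE /= eq_m.
Qed.

Lemma det_scale_col (R : comNzRingType) r (M : 'M[{poly R}]_r) j c :
  \det (\matrix_(i, k) (if k == j then c *: M i k else M i k)) = c *: \det M.
Proof.
have -> : \matrix_(i, k) (if k == j then c *: M i k else M i k) =
    M *m diag_mx (\row_k (if k == j then c%:P else 1)).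
  apply/matrixP => i k; rewrite mul_mx_diag !mxE.
  by case: eqP => _; rewrite ?mulr1 // mulrC mul_polyC.
rewrite det_mulmx det_diag (bigD1 j) //= big1 => [|k /negbTE k_neq]; last by rewrite mxE k_neq.
by rewrite !mxE eqxx mulr1 mulrC mul_polyC.
Qed.

Section Appell.
Variables (R : fieldType) (A : nat -> {poly R}).
Hypothesis A_Appell : is_Appell A.

Lemma appell_deriv (k : nat) : (A k)^`() = k%:R *: A k.-1.
Proof.
case: A_Appell => A0 AS; case: k => [|k]; last exact: AS.
by rewrite A0 -polyC1 derivC scale0r.
Qed.

Lemma deriv_wronskian r n :
  (wronskian A r n)^`() = \sum_(j < r) (n j)%:R *: wronskian A r (decr n j).
Proof.
rewrite /wronskian deriv_det; apply: eq_bigr => j _.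
rewrite -(det_scale_col _ j); congr (\det _); apply/matrixP => i k; rewrite !mxE /decr.
case: (k =P j) => [->|/eqP k_neq]; last by rewrite val_eqE (negbTE k_neq).
by rewrite eqxx -derivnS derivSn appell_deriv derivnZ.
Qed.

Lemma wronskian_shift r m : m 0%N = 0%N ->
  wronskian A r.+1 m = (\prod_(k < r) (m k.+1)%:R) *: wronskian A r (fun k => (m k.+1).-1).
Proof.
(* Column 0 is (1, 0, ..., 0)^T since A 0 = 1: expand along it. *)
case: A_Appell => A0 _ m0; rewrite /wronskian (expand_det_col _ ord0) big_ord_recl /=.
rewrite big1 ?addr0 => [|i _]; last by rewrite mxE m0 A0 -polyC1 derivnC mul0r.
rewrite mxE m0 A0 derivn0 mul1r /cofactor expr0 mul1r.
have -> : row' ord0 (col' ord0 (wronskian_mx A r.+1 m)) =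
    wronskian_mx A r (fun k => (m k.+1).-1) *m diag_mx (\row_k ((m k.+1)%:R)%:P).
  apply/matrixP => i k; rewrite mul_mx_diag !mxE !lift0 derivSn appell_deriv derivnZ.
  by rewrite mulrC mul_polyC.
rewrite det_mulmx det_diag mulrC -mul_polyC rmorph_prod; congr (_ * _).
by apply: eq_bigr => k _; rewrite mxE.
Qed.

End Appell.

(** * Vandermonde products *)

Definition vandermonde_prod (R : nzRingType) r (n : nat -> nat) : R :=
  \prod_(i < r) \prod_(j < r | (i < j)%N) ((n j)%:R - (n i)%:R).

Section VandermondeProd.
Variable R : comNzRingType.

Lemma eq_vandermonde_prod r m m' :
  {in gtn r, m =1 m'} -> vandermonde_prod R r m = vandermonde_prod R r m'.
Proof.
by move=> eq_m; apply: eq_bigr => i _; apply: eq_bigr => j _; rewrite !eq_m ?inE /=.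
Qed.

Lemma vandermonde_prod_eq0 r m j : (j.+1 < r)%N -> m j = m j.+1 -> vandermonde_prod R r m = 0.
Proof.
move=> j1_lt eq_m; rewrite /vandermonde_prod (bigD1 (Ordinal (ltnW j1_lt))) //=.
by rewrite (bigD1 (Ordinal j1_lt)) //= eq_m subrr !mul0r.
Qed.

Lemma vandermonde_prod_shift r m : m 0%N = 0%N -> (forall k, (k < r)%N -> (0 < m k.+1)%N) ->
  vandermonde_prod R r.+1 m =
  (\prod_(k < r) (m k.+1)%:R) * vandermonde_prod R r (fun k => (m k.+1).-1).
Proof.
move=> m0 m_gt0; rewrite /vandermonde_prod big_ord_recl /=; congr (_ * _).
  rewrite big_mkcond big_ord_recl /= mul1r.
  by apply: eq_bigr => j _; rewrite m0 subr0.
apply: eq_bigr => i _; rewrite big_mkcond big_ord_recl /= mul1r [RHS]big_mkcond.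
apply: eq_bigr => j _; rewrite /bump /= !add1n ltnS; case: ifP => // _.
by rewrite -[m j.+1](prednK (m_gt0 j _)) // -[m i.+1](prednK (m_gt0 i _)) // !mulrS /=; ring.
Qed.

Definition falling_poly i : {poly R} := \prod_(t <- iota 0 i) ('X - t%:R%:P).

Lemma size_falling_poly i : size (falling_poly i) = i.+1.
Proof. by rewrite size_prod_XsubC size_iota. Qed.

Lemma falling_polyE i x : (falling_poly i).[x%:R] = (x ^_ i)%:R.
Proof.
rewrite horner_prod; elim: i => [|i IH]; first by rewrite ffactn0 big_nil.
rewrite ffactnSr natrM -addn1 iotaD big_cat big_seq1 add0n hornerXsubC /= IH.
by have [le_ix|lt_xi] := leqP i x; [rewrite natrB | rewrite ffact_small ?mul0r].
Qed.

Lemma det_falling_factorial r n :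
  \det (\matrix_(i < r, j < r) ((n j) ^_ i)%:R) = vandermonde_prod R r n.
Proof.
(* Row i evaluates the monic polynomial falling_poly i of degree i at the n j: the matrix is a
   unitriangular transform of the Vandermonde matrix. *)
pose L := \matrix_(i < r, k < r) (falling_poly i)`_k.
have -> : \matrix_(i < r, j < r) ((n j) ^_ i)%:R = L *m Vandermonde r (\row_j (n j)%:R).
  apply/matrixP => i j; rewrite !mxE -falling_polyE.
  rewrite (horner_coef_wide _ (_ : size (falling_poly i) <= r)%N) ?size_falling_poly //.
  by apply: eq_bigr => k _; rewrite !mxE.
rewrite det_mulmx det_Vandermonde det_trig; last first.
  by apply/is_trig_mxP => i k lt_ik; rewrite mxE nth_default // size_falling_poly.
rewrite big1 ?mul1r => [|i _]; last first.
  have := lead_coef_prod_XsubC (iota 0 i) predT (fun t => t%:R : R).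
  by rewrite lead_coefE size_prod_XsubC size_iota mxE.
by apply: eq_bigr => i _; apply: eq_bigr => j _; rewrite !mxE.
Qed.

Lemma wronskian_monomials r n :
  'X^(\sum_(i < r) i) * wronskian (fun k => 'X^k) r n =
  (vandermonde_prod R r n)%:P * 'X^(\sum_(j < r) n j).
Proof.
have scale_rows : diag_mx (\row_(i < r) 'X^i) *m wronskian_mx (fun k => 'X^k) r n =
    map_mx polyC (\matrix_(i < r, j < r) ((n j) ^_ i)%:R : 'M[R]_r) *m
    diag_mx (\row_(j < r) 'X^(n j)).
  apply/matrixP => i j; rewrite mul_diag_mx mul_mx_diag !mxE derivnXn.
  have [le_in|lt_ni] := leqP i (n j); last by rewrite ffact_small // !mulr0n mulr0 mul0r.
  by rewrite mulrnAr -exprD subnKC // polyC_natr mulr_natl.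
have row_prod (F : nat -> nat) :
    \prod_(i < r) (\row_(i < r) 'X^(F i)) 0 i = 'X^(\sum_(i < r) F i) :> {poly R}.
  by rewrite -prodrXr; apply: eq_bigr => i _; rewrite mxE.
have := congr1 determinant scale_rows.
by rewrite !det_mulmx !det_diag det_map_mx det_falling_factorial (row_prod id) row_prod.
Qed.

End VandermondeProd.

Lemma monomials_Appell (R : fieldType) : is_Appell (fun k => 'X^k : {poly R}).
Proof. by split=> // k; rewrite derivXn scaler_nat. Qed.

Lemma vandermonde_prod_decr (R : fieldType) r (n : nat -> nat) :
  (forall j, (j < r)%N -> (0 < n j)%N) ->
  \sum_(j < r) (n j)%:R * vandermonde_prod R r (decr n j) =
  ((\sum_(j < r) n j)%:R - (\sum_(i < r) i)%:R) * vandermonde_prod R r n.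
Proof.
case: r => [|r] n_gt0; first by rewrite !big_ord0 subrr mul0r.
set N := (\sum_(j < r.+1) n j)%N; set C := (\sum_(i < r.+1) i)%N.
set W := wronskian (fun k => 'X^k : {poly R}) r.+1.
set D := vandermonde_prod R r.+1.
have N_gt0 : (0 < N)%N by rewrite /N big_ord_recl (leq_trans (n_gt0 0%N isT)) ?leq_addr.
have X_deriv k : 'X * ('X^k)^`() = k%:R *: 'X^k :> {poly R}.
  by case: k => [|k]; rewrite derivXn ?mulr0n ?mulr0 ?scale0r // mulrnAr -exprS scaler_nat.
have W_decr (j : 'I_r.+1) : 'X^C * W (decr n j) = (D (decr n j))%:P * 'X^(N.-1).
  by rewrite wronskian_monomials sum_decr ?n_gt0.
(* Compute X (X^C W(n))' once from X^C W(n) = D(n) X^N and once by the Leibniz rule. *)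
have lhs : 'X * ('X^C * W n)^`() = (N%:R * D n) *: 'X^N.
  by rewrite wronskian_monomials deriv_mulC mulrCA X_deriv -scalerAr mul_polyC scalerA mulrC.
have rhs : 'X * ('X^C * W n)^`() =
    (C%:R * D n) *: 'X^N + (\sum_(j < r.+1) (n j)%:R * D (decr n j)) *: 'X^N.
  rewrite derivM mulrDr mulrA X_deriv -scalerAl wronskian_monomials mul_polyC scalerA.
  rewrite (deriv_wronskian (monomials_Appell R)) mulrCA !mulr_sumr scaler_suml; congr (_ + _).
  apply: eq_bigr => j _; rewrite -!scalerAr mulrCA W_decr mulrCA -exprS prednK //.
  by rewrite mul_polyC scalerA.
have := congr1 (coefp N) (etrans (esym lhs) rhs).
by rewrite /= coefD !coefZ coefXn eqxx !mulr1 mulrBl => ->; rewrite addrC addKr.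
Qed.

(** * Frobenius' formula *)

Section RowRemoval.
Variables (V : zmodType) (f : nat -> (nat -> nat) -> V).
Hypothesis f_ext : forall r m m', {in gtn r, m =1 m'} -> f r m = f r m'.
Hypothesis f_eq0 : forall r m j, (j.+1 < r)%N -> m j = m j.+1 -> f r m = 0.
Hypothesis f_shift : forall r m, m 0%N = 0%N -> (forall k, (k < r)%N -> (0 < m k.+1)%N) ->
  f r.+1 m = f r (fun k => (m k.+1).-1).

Lemma sum_decr_nseq_of la : is_partition la ->
  \sum_(j < size la) f (size la) (decr (nseq_of la) j) =
  \sum_(i < size la | removable la i) f (size (remove_cell la i)) (nseq_of (remove_cell la i)).
Proof.
(* Row i of la carries the entry of index size la - i.+1 of nseq_of la. *)
move=> la_part; rewrite (reindex_inj rev_ord_inj) [RHS]big_mkcond /=.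
apply: eq_bigr => -[i i_lt] _ /=.
case: ifP => [i_rem|/negbT i_nrem]; last first.
  have [j_gt0 eq_j] := nseq_of_nonremovable la_part i_lt i_nrem.
  by apply: (f_eq0 (j := (size la - i.+1).-1)); rewrite prednK //; lia.
have [la_i_gt1|] := ltnP 1%N (nth 0%N la i).
  have [mu_size eq_mu] := nseq_of_remove_cell la_part i_rem la_i_gt1.
  by rewrite mu_size; apply: f_ext => k; apply: eq_mu.
move=> le_la_i1; have la_i1 : nth 0%N la i = 1%N by have := part_nth_gt0 la_part i_lt; lia.
have [la_size mu_size m0 eq_mu] := nseq_of_remove_last_cell la_part i_rem la_i1.
rewrite la_size subnn mu_size f_shift => [|//|k k_lt]; last by rewrite eq_mu.
by apply: f_ext => k k_lt; rewrite eq_mu.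
Qed.

End RowRemoval.

Definition norm_wronskian (R : fieldType) (A : nat -> {poly R}) r n : {poly R} :=
  ((prod_fact r n)%:R)^-1 *: wronskian A r n.

Definition norm_vandermonde (R : fieldType) r n : R :=
  ((prod_fact r n)%:R)^-1 * vandermonde_prod R r n.

Section Frobenius.
Variable R : fieldType.
Hypothesis charR0 : [pchar R] =i pred0.

Lemma natr_neq0 x : (0 < x)%N -> x%:R != 0 :> R.
Proof. by rewrite (proj1 (pcharf0P R) charR0) -lt0n. Qed.

Lemma vandermonde_prod_neq0 r m :
  (forall i j, (i < j)%N -> (j < r)%N -> (m i < m j)%N) -> vandermonde_prod R r m != 0.
Proof.
move=> m_incr; apply/prodf_neq0 => i _; apply/prodf_neq0 => j lt_ij.
have lt_m := m_incr i j lt_ij (ltn_ord j).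
by rewrite -natrB ?(ltnW lt_m) // natr_neq0 // subn_gt0.
Qed.

Lemma nseq_of_vandermonde_neq0 la : is_partition la ->
  vandermonde_prod R (size la) (nseq_of la) != 0.
Proof. by move=> la_part; apply: vandermonde_prod_neq0 => // i j; apply: nseq_of_lt. Qed.

Lemma eq_norm_vandermonde r m m' :
  {in gtn r, m =1 m'} -> norm_vandermonde R r m = norm_vandermonde R r m'.
Proof.
by move=> eq_m; rewrite /norm_vandermonde (eq_prod_fact eq_m) (eq_vandermonde_prod _ eq_m).
Qed.

Lemma norm_vandermonde_eq0 r m j :
  (j.+1 < r)%N -> m j = m j.+1 -> norm_vandermonde R r m = 0.
Proof.
by move=> j1_lt eq_m; rewrite /norm_vandermonde (vandermonde_prod_eq0 _ j1_lt eq_m) mulr0.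
Qed.

Lemma norm_vandermonde_shift r m :
  m 0%N = 0%N -> (forall k, (k < r)%N -> (0 < m k.+1)%N) ->
  norm_vandermonde R r.+1 m = norm_vandermonde R r (fun k => (m k.+1).-1).
Proof.
move=> m0 m_gt0; rewrite /norm_vandermonde vandermonde_prod_shift // prod_fact_shift //.
rewrite natrM invfM natr_prod mulrACA mulVf ?mul1r //.
by rewrite -natr_prod natr_neq0 //; apply: prodn_gt0 => k; exact: m_gt0.
Qed.

Lemma norm_vandermonde_decr r n : (forall j, (j < r)%N -> (0 < n j)%N) ->
  \sum_(j < r) norm_vandermonde R r (decr n j) =
  ((\sum_(j < r) n j)%:R - (\sum_(i < r) i)%:R) * norm_vandermonde R r n.
Proof.
move=> n_gt0; rewrite /norm_vandermonde mulrCA -vandermonde_prod_decr // mulr_sumr.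
apply: eq_bigr => j _; have nj_gt0 := n_gt0 j (ltn_ord j).
rewrite (prod_fact_decr nj_gt0) natrM invfM mulrAC mulrA mulVf ?natr_neq0 //.
by rewrite mul1r mulrC.
Qed.

Lemma num_SYT_frobenius la : is_partition la ->
  (num_SYT la)%:R = ((psize la)`!)%:R * norm_vandermonde R (size la) (nseq_of la).
Proof.
have [N] := ubnP (psize la); elim: N la => // N IH la la_lt la_part.
have [/(psize_eq0 la_part) ->|la_gt0] := posnP (psize la).
  by rewrite num_SYT_nil /norm_vandermonde /prod_fact /vandermonde_prod !big_ord0 invr1 !mulr1.
have := norm_vandermonde_decr (nseq_of_gt0 la_part).
rewrite sum_nseq_of // natrD addrK => sum_decr_eq.
have fact_la : ((psize la)`!)%:R = (psize la)%:R * (((psize la).-1)`!)%:R :> R.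
  by rewrite -natrM -[X in X`!](prednK la_gt0) factS prednK.
rewrite num_SYT_branch // natr_sum fact_la mulrAC -sum_decr_eq mulrC.
rewrite (sum_decr_nseq_of eq_norm_vandermonde norm_vandermonde_eq0 _ la_part); last first.
  by move=> r m; apply: norm_vandermonde_shift.
rewrite mulr_sumr; apply: eq_bigr => i i_rem.
have mu_size := psize_remove_cell la_part (ltn_ord i).
rewrite IH ?remove_cell_partition //; first by rewrite -mu_size.
by rewrite -ltnS mu_size.
Qed.

Section Appell.
Variable A : nat -> {poly R}.
Hypothesis A_Appell : is_Appell A.

Lemma eq_norm_wronskian r m m' :
  {in gtn r, m =1 m'} -> norm_wronskian A r m = norm_wronskian A r m'.
Proof. by move=> eq_m; rewrite /norm_wronskian (eq_prod_fact eq_m) (eq_wronskian _ eq_m). Qed.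

Lemma norm_wronskian_eq0 r m j : (j.+1 < r)%N -> m j = m j.+1 -> norm_wronskian A r m = 0.
Proof. by move=> j1_lt eq_m; rewrite /norm_wronskian (wronskian_eq0 _ j1_lt eq_m) scaler0. Qed.

Lemma norm_wronskian_shift r m :
  m 0%N = 0%N -> (forall k, (k < r)%N -> (0 < m k.+1)%N) ->
  norm_wronskian A r.+1 m = norm_wronskian A r (fun k => (m k.+1).-1).
Proof.
move=> m0 m_gt0; rewrite /norm_wronskian wronskian_shift // prod_fact_shift //.
rewrite scalerA natrM invfM natr_prod mulrAC mulVf ?mul1r //.
by rewrite -natr_prod natr_neq0 //; apply: prodn_gt0 => k; exact: m_gt0.
Qed.

Lemma deriv_norm_wronskian r n : (forall j, (j < r)%N -> (0 < n j)%N) ->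
  (norm_wronskian A r n)^`() = \sum_(j < r) norm_wronskian A r (decr n j).
Proof.
move=> n_gt0; rewrite derivZ deriv_wronskian // scaler_sumr; apply: eq_bigr => j _.
rewrite /norm_wronskian scalerA (prod_fact_decr (n_gt0 j (ltn_ord j))) natrM invfM.
by rewrite mulrAC mulVf ?mul1r // natr_neq0 ?n_gt0.
Qed.

Lemma num_SYT_scale_wr_appell la : is_partition la ->
  (num_SYT la)%:R *: wr_appell A la =
  ((psize la)`!)%:R *: norm_wronskian A (size la) (nseq_of la).
Proof.
move=> la_part; rewrite num_SYT_frobenius // /norm_wronskian /wr_appell !scalerA.
by rewrite /norm_vandermonde mulrA mulfK ?nseq_of_vandermonde_neq0.
Qed.

End Appell.
End Frobenius.

Theorem theorem5p1 (R : fieldType) (A : nat -> {poly R})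
  (charR0 : [pchar R] =i pred0) (hA : is_Appell A)
  (la : seq nat) (hla : is_partition la) :
  (num_SYT la)%:R *: (wr_appell A la)^`() =
  (psize la)%:R *:
    \sum_(i < size la | removable la i)
       (num_SYT (remove_cell la i))%:R *: wr_appell A (remove_cell la i).
Proof.
rewrite -derivZ num_SYT_scale_wr_appell // derivZ deriv_norm_wronskian //; last first.
  exact: nseq_of_gt0.
rewrite (sum_decr_nseq_of (@eq_norm_wronskian R A) (@norm_wronskian_eq0 R A) _ hla); last first.
  by move=> r m; apply: norm_wronskian_shift.
rewrite !scaler_sumr; apply: eq_bigr => i i_rem.
rewrite num_SYT_scale_wr_appell ?remove_cell_partition // scalerA -natrM.
by rewrite -(psize_remove_cell hla (ltn_ord i)) -factS.
Qed.
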